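(* Let $A$ be an $n\times n$ array with exactly $\beta n^2$ distinct symbols. If row $i$ of $A$ contains $d\ge 1$ cells whose symbols are clones, then there is a cell $(i,j)$ in row $i$ whose symbol $A_{ij}$ is a clone and such that $$|R_i(A)\cup C_j(A)|\ \ge\ |R_i(A)|+\frac{\beta n^2-(n-d)(n-1)-|R_i(A)|}{d}.$$
   Context: An $n\times n$ array has a symbol in each cell (symbols may repeat arbitrarily). A symbol is a singleton if it occurs exactly once in the array and a clone otherwise; we say $A_{ij}$ is a clone (singleton) if the symbol in cell $(i,j)$ is a clone (singleton). $R_i(A)$ and $C_j(A)$ denote the sets of symbols occurring in row $i$ and column $j$ of $A$, respectively. *)

From HB Require Import structures.
From mathcomp Require Import all_boot all_order all_algebra.
Set Implicit Arguments. Unset Strict Implicit. Unset Printing Implicit Defensive.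

Definition array (T : Type) (n : nat) := 'I_n -> 'I_n -> T.

Section ArrayDefs.
Variables (T : finType) (n : nat) (A : array T n).

Definition symbols : {set T} := [set A ij.1 ij.2 | ij : 'I_n * 'I_n].

Definition occurrences (s : T) : nat :=
  #|[set ij : 'I_n * 'I_n | A ij.1 ij.2 == s]|.

Definition is_clone (s : T) : bool := 1 < occurrences s.
Definition is_singleton (s : T) : bool := occurrences s == 1.

Definition row_syms (i : 'I_n) : {set T} := [set A i j | j : 'I_n].
Definition col_syms (j : 'I_n) : {set T} := [set A k j | k : 'I_n].

Definition row_clone_count (i : 'I_n) : nat := #|[set j : 'I_n | is_clone (A i j)]|.
End ArrayDefs.

From HB Require Import structures.
From mathcomp Require Import all_boot all_order all_algebra.
From mathcomp Require Import lra.
Import Order.TTheory GRing.Theory Num.Theory.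

Set Implicit Arguments.
Unset Strict Implicit.
Unset Printing Implicit Defensive.

(* Let D be the set of clone cells of row i.  Every symbol of A lies in R_i,
   or in one of the (n - d)(n - 1) cells outside row i and outside the columns
   of D, or in C_j \ R_i for some j in D.  Hence
   beta n^2 <= |R_i| + (n - d)(n - 1) + sum_(j in D) |C_j \ R_i|,
   and a column j in D maximising |C_j \ R_i| has at least the average. *)

Lemma leq_card_bigcup (T I : finType) (P : pred I) (F : I -> {set T}) :
  #|\bigcup_(j | P j) F j| <= \sum_(j | P j) #|F j|.
Proof.
elim/big_ind2: _ => [|A1 A2 n1 n2 le1 le2|//]; first by rewrite cards0.
by apply: leq_trans (leq_card_setU _ _) _; apply: leq_add.
Qed.

Lemma cardsUD (T : finType) (A B : {set T}) : #|A :|: B| = #|A| + #|B :\: A|.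
Proof. by rewrite cardsU cardsD setIC addnBA // subset_leq_card // subsetIl. Qed.

Lemma sum_leq_card_mul_max (I : finType) (F : I -> nat) (D : {set I}) :
  D != set0 -> exists2 j, j \in D & \sum_(k in D) F k <= #|D| * F j.
Proof.
case/set0Pn=> j0 j0D; have [j jD maxFj] := @arg_maxnP _ j0 (mem D) F j0D.
by exists j => //; rewrite -sum_nat_const; apply: leq_sum.
Qed.

Section RowColumnSymbols.
Variables (T : finType) (n : nat) (A : array T n) (i : 'I_n).

Local Notation R := (row_syms A i).

Lemma symbols_sub_row_cover (D : {set 'I_n}) :
  symbols A \subset R :|: [set A kj.1 kj.2 | kj in setX [set~ i] (~: D)]
                      :|: \bigcup_(j in D) (col_syms A j :\: R).
Proof.
apply/subsetP=> _ /imsetP[[k j] _ ->] /=.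
have [->|ki] := eqVneq k i; first by rewrite !inE imset_f.
have [AkjR|AkjNR] := boolP (A k j \in R); first by rewrite !inE AkjR.
have [jD|jND] := boolP (j \in D).
  apply/setUP; right; apply/bigcupP; exists j => //.
  by rewrite inE AkjNR imset_f.
apply/setUP; left; apply/setUP; right.
by apply/imsetP; exists (k, j); rewrite // !inE ki jND.
Qed.

Lemma card_symbols_leq (D : {set 'I_n}) :
  #|symbols A| <= #|R| + (n - #|D|) * n.-1
                  + \sum_(j in D) #|col_syms A j :\: R|.
Proof.
apply: leq_trans (subset_leq_card (symbols_sub_row_cover D)) _.
apply: leq_trans (leq_card_setU _ _) _; apply: leq_add; last exact: leq_card_bigcup.
apply: leq_trans (leq_card_setU _ _) _; rewrite leq_add2l.
apply: leq_trans (leq_imset_card _ _) _.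
by rewrite cardsX cardsC1 cardsCs setCK card_ord mulnC.
Qed.

Lemma exists_col_card_row_col_syms (D : {set 'I_n}) : D != set0 ->
  exists2 j, j \in D &
    #|symbols A| + #|D| * #|R| <= #|R| + (n - #|D|) * n.-1
                                   + #|D| * #|R :|: col_syms A j|.
Proof.
move=> D_neq0.
have [j jD avg] := sum_leq_card_mul_max (fun j => #|col_syms A j :\: R|) D_neq0.
exists j => //; rewrite cardsUD mulnDr addnCA [leqLHS]addnC leq_add2l.
exact: leq_trans (card_symbols_leq D) (leq_add (leqnn _) avg).
Qed.

End RowColumnSymbols.

Local Open Scope ring_scope.

Theorem mainTheorem4 (T : finType) (n : nat) (A : array T n) (beta : rat)
    (i : 'I_n) (d : nat) :
  #|symbols A|%:R = beta * (n%:R ^+ 2) ->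
  row_clone_count A i = d ->
  (1 <= d)%N ->
  exists j : 'I_n, is_clone A (A i j) /\
    (#|row_syms A i|%:R
       + (beta * n%:R ^+ 2 - (n%:R - d%:R) * (n%:R - 1) - #|row_syms A i|%:R) / d%:R
     <= #|row_syms A i :|: col_syms A j|%:R :> rat).
Proof.
move=> <- clones_i d_gt0; set D := [set j | is_clone A (A i j)].
have cardD : #|D| = d := clones_i.
have D_neq0 : D != set0 by rewrite -card_gt0 cardD.
have [j jD] := exists_col_card_row_col_syms A i D_neq0.
rewrite cardD -(ler_nat rat) !natrD !natrM => avg.
exists j; split; first by rewrite inE in jD.
have d_le_n : (d <= n)%N by rewrite -cardD -[X in (_ <= X)%N]card_ord max_card.
rewrite natrB // -subn1 natrB ?(leq_trans d_gt0) // in avg.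
by rewrite -lerBrDl ler_pdivrMr ?ltr0n //; lra.
Qed.
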